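(* Let $p=\xi_1+i\operatorname{Im}p$ be a smooth function on $T^\ast(\mathbb{R}^n)\smallsetminus0$ with $\operatorname{Im}p$ independent of $\xi_1$, and let $\gamma$ be a bicharacteristic of $\operatorname{Re}p=\xi_1$ with $L_p(\gamma)>0$. Then there exist bicharacteristics $\gamma_j$ of $\operatorname{Re}p$ and subintervals $\tilde\gamma_j\subset\gamma_j$ with $\gamma_j\dashrightarrow\gamma$, such that $|\tilde\gamma_j|\to L_p(\gamma)$, $\operatorname{Im}p$ strongly changes sign from $-$ to $+$ on $\gamma_j$, and $\operatorname{Im}p$ vanishes in a neighborhood of $\tilde\gamma_j$.
   Context: Write points of $T^\ast(\mathbb{R}^n)$ as $(x_1,x',\xi_1,\xi')$. A bicharacteristic of $\xi_1$ is $\gamma=[a,b]\times\{w_0\}=\{(t,x',0,\xi'):a\le t\le b\}$, $w_0=(x',0,\xi')$; write $g(t,w)$; $|\gamma|=b-a$. For $\gamma_j=[a_j,b_j]\times\{w_j\}$, $\gamma_j\dashrightarrow\gamma$ means $\liminf a_j\ge a$, $\limsup b_j\le b$, $w_j\to w_0$. $\operatorname{Im}p$ strongly changes sign from $-$ to $+$ on $[a,b]\times\{w_0\}$ if $\operatorname{Im}p(t,w_0)=0$ for $a\le t\le b$ and for every $\varepsilon>0$ there exist $a-\varepsilon<s_-<a$, $b<s_+<b+\varepsilon$ with $\operatorname{Im}p(s_-,w_0)<0<\operatorname{Im}p(s_+,w_0)$. If some sequence of bicharacteristics $\gamma_j$ of $\xi_1$ with this sign change satisfies $\gamma_j\dashrightarrow\gamma$,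 then $L_p(\gamma)=\inf\liminf_j|\gamma_j|$ over all such sequences. *)

From HB Require Import structures.
From mathcomp Require Import all_boot all_order all_algebra.
From mathcomp Require Import all_classical all_reals all_analysis.
Set Implicit Arguments. Unset Strict Implicit. Unset Printing Implicit Defensive.
Import Order.TTheory GRing.Theory Num.Theory.
Import numFieldNormedType.Exports.
Local Open Scope classical_set_scope.
Local Open Scope ring_scope.

(* Points of T^*(R^{n+1}) are pairs (x, xi) of row vectors; coordinate
   ord0 is x_1 (resp. xi_1), the remaining n coordinates are x' (resp. xi'). *)
Definition cotan (R : realType) (n : nat) := ('rV[R]_n.+1 * 'rV[R]_n.+1)%type.

Fixpoint iderive (R : realType) (V : normedModType R) (vs : seq V)
    (f : V -> R) : V -> R :=
  if vs is v :: vs' then 'D_v (iderive vs' f) else f.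

Definition smooth_on (R : realType) (V : normedModType R) (U : set V)
    (f : V -> R) : Prop :=
  forall (vs : seq V) (x : V), U x ->
    {for x, continuous (iderive vs f)} /\
    forall v : V, derivable (iderive vs f) x v.

Definition cotan0 (R : realType) (n : nat) : set (cotan R n) :=
  [set z | z.2 != 0].
Arguments cotan0 : clear implicits.

(* g(t, w) with w = (x', 0, xi'): the point (t, x', 0, xi') *)
Definition gpt (R : realType) (n : nat) (t : R) (x' xi' : 'rV[R]_n) :
    cotan R n :=
  ((row_mx t%:M x' : 'rV[R]_(1 + n)), (row_mx 0 xi' : 'rV[R]_(1 + n))).

(* [a,b] x {(x',0,xi')} is a bicharacteristic (interval) of xi_1 in T^* minus 0 *)
Definition is_bichar (R : realType) (n : nat) (a b : R) (x' xi' : 'rV[R]_n) :=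
  a <= b /\ xi' != 0.

Definition strong_sign_change (R : realType) (n : nat) (q : cotan R n -> R)
    (a b : R) (x' xi' : 'rV[R]_n) : Prop :=
  (forall t, a <= t <= b -> q (gpt t x' xi') = 0) /\
  forall eps : R, 0 < eps -> exists sm sp : R,
    [/\ a - eps < sm < a, b < sp < b + eps,
        q (gpt sm x' xi') < 0 & 0 < q (gpt sp x' xi')].

Definition bichar_conv (R : realType) (n : nat)
    (aj bj : nat -> R) (xj xij : nat -> 'rV[R]_n)
    (a b : R) (x' xi' : 'rV[R]_n) : Prop :=
  [/\ (a%:E <= limn_einf (fun j => (aj j)%:E))%E,
      (limn_esup (fun j => (bj j)%:E) <= b%:E)%E,
      xj @ \oo --> x' & xij @ \oo --> xi'].

Definition Lp_set (R : realType) (n : nat) (q : cotan R n -> R)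
    (a b : R) (x' xi' : 'rV[R]_n) : set (\bar R) :=
  [set l | exists (aj bj : nat -> R) (xj xij : nat -> 'rV[R]_n),
     [/\ forall j, is_bichar (aj j) (bj j) (xj j) (xij j),
         forall j, strong_sign_change q (aj j) (bj j) (xj j) (xij j),
         bichar_conv aj bj xj xij a b x' xi' &
         l = limn_einf (fun j => (bj j - aj j)%:E)]].

(* L_p(gamma) = inf of Lp_set (meaningful when Lp_set is nonempty) *)
Definition Lp (R : realType) (n : nat) (q : cotan R n -> R)
    (a b : R) (x' xi' : 'rV[R]_n) : \bar R :=
  ereal_inf (Lp_set q a b x' xi').

From HB Require Import structures.
From mathcomp Require Import all_boot all_order all_algebra.
From mathcomp Require Import all_classical all_reals all_analysis.
From mathcomp Require Import lra.
Import Order.TTheory GRing.Theory Num.Theory.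
Import numFieldNormedType.Exports.
Local Open Scope classical_set_scope.
Local Open Scope ring_scope.

(* Let L = L_p(gamma). As L is an infimum, sign-changing bicharacteristics of
   length < L - d stay away from gamma, while some gamma1 = [al, be] x {w1}
   of length < L + d comes as close to gamma as we like. If Im p were nonzero
   at a point z near g(t, w1) with be - L + 2d <= t <= al + L - 2d, then,
   Im p being independent of xi_1, z lies on a bicharacteristic close to
   gamma1, along which Im p is negative near al and positive near be; so
   Im p strongly changes sign on a sub-bicharacteristic of [al, t] or
   [t, be] (up to small errors), of length < L - d: a contradiction. Hence
   Im p vanishes near g([be - L + 2d, al + L - 2d], w1), an interval of
   length close to L. *)

Section MatrixNorm.
Context {R : realDomainType}.

Lemma mx_norm_le {m k} (M : 'M[R]_(m, k)) (c : R) :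
  0 <= c -> (forall i j, `|M i j| <= c) -> `|M| <= c.
Proof.
by move=> c0 H; rewrite [`|M|]mx_normrE; apply/bigmax_leP; split => // -[i j].
Qed.

Lemma mx_norm_ge_entry {m k} (M : 'M[R]_(m, k)) i j : `|M i j| <= `|M|.
Proof. by rewrite [`|M|]mx_normrE; apply: (le_bigmax _ _ (i, j)). Qed.

Lemma mx_norm_row_mx {m k1 k2} (A : 'M[R]_(m, k1)) (B : 'M[R]_(m, k2)) :
  `|row_mx A B| <= Num.max `|A| `|B|.
Proof.
apply: mx_norm_le => [|i j]; first by rewrite le_max normr_ge0.
rewrite -(splitK j); case: (fintype.split j) => j' /=.
  by rewrite row_mxEl le_max mx_norm_ge_entry.
by rewrite row_mxEr le_max mx_norm_ge_entry orbT.
Qed.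

Lemma mx_norm_rsubmx {m k1 k2} (A : 'M[R]_(m, k1 + k2)) : `|rsubmx A| <= `|A|.
Proof. by apply: mx_norm_le => // i j; rewrite mxE mx_norm_ge_entry. Qed.

Lemma mx_norm_scalar1 (c : R) : `|(c%:M : 'M[R]_1)| = `|c|.
Proof.
apply/eqP; rewrite eq_le; apply/andP; split; last first.
  by have := mx_norm_ge_entry (c%:M : 'M[R]_1) ord0 ord0; rewrite mxE eqxx mulr1n.
by apply: mx_norm_le => // i j; rewrite mxE !ord1 eqxx mulr1n.
Qed.

End MatrixNorm.

Section CotangentCoordinates.
Context {R : realType} {n : nat}.
Implicit Types (s t : R) (x xi : 'rV[R]_n) (z : cotan R n).

Lemma row_mx0_neq0 xi : xi != 0 -> (row_mx (0 : 'M[R]_1) xi : 'rV[R]_n.+1) != 0.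
Proof.
apply: contra => /eqP /(congr1 (@rsubmx R 1 1 n)); rewrite row_mxKr => ->.
by rewrite linear0.
Qed.

Lemma gpt_cotan0 s x xi : xi != 0 -> cotan0 R n (gpt s x xi).
Proof. exact: row_mx0_neq0. Qed.

Lemma gptB s s' x x' xi xi' :
  gpt s x xi - gpt s' x' xi' = gpt (s - s') (x - x') (xi - xi').
Proof.
by rewrite /gpt; congr (_, _) => /=;
  rewrite (@opp_row_mx _ 1 1 n) (@add_row_mx _ 1 1 n) ?raddfB ?subr0.
Qed.

Lemma norm_gpt s x xi : `|gpt s x xi| <= Num.max `|s| (Num.max `|x| `|xi|).
Proof.
rewrite prod_normE ge_max; apply/andP; split.
  apply: le_trans (@mx_norm_row_mx _ 1 1 n _ _) _.
  by rewrite mx_norm_scalar1 ge_max !le_max !lexx /= ?orbT.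
apply: le_trans (@mx_norm_row_mx _ 1 1 n _ _) _.
by rewrite normr0 ge_max !le_max !normr_ge0 lexx /= !orbT.
Qed.

Lemma row_mx_entry0_rsubmx (X : 'rV[R]_n.+1) :
  row_mx ((X ord0 ord0)%:M : 'M[R]_1) (rsubmx (X : 'M[R]_(1, 1 + n))) = X.
Proof.
rewrite -[RHS](@hsubmxK _ 1 1 n); congr row_mx.
by rewrite [RHS]mx11_scalar mxE; congr (_%:M); congr (X _ _); exact: val_inj.
Qed.

Lemma row_mx0_rsubmx_eq (X : 'rV[R]_n.+1) (i : 'I_n.+1) : i != ord0 ->
  (row_mx (0 : 'M[R]_1) (rsubmx (X : 'M[R]_(1, 1 + n))) : 'rV[R]_n.+1) ord0 i =
  X ord0 i.
Proof.
rewrite -(splitK (i : 'I_(1 + n))); case: (fintype.split _) => j /=.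
  by rewrite ord1; have -> : lshift n (ord0 : 'I_1) = ord0 by exact: val_inj.
by move=> _; rewrite (@row_mxEr _ 1 1 n) mxE.
Qed.

Lemma gpt_fst_entry0 t x xi : (gpt t x xi).1 ord0 ord0 = t.
Proof.
have -> : ord0 = lshift n (ord0 : 'I_1) by exact: val_inj.
by rewrite (@row_mxEl _ 1 1 n) mxE eqxx mulr1n.
Qed.

Lemma dist_gpt_coords t x xi z :
  [/\ `|z.1 ord0 ord0 - t| <= `|z - gpt t x xi|,
      `|rsubmx (z.1 : 'M[R]_(1, 1 + n)) - x| <= `|z - gpt t x xi| &
      `|rsubmx (z.2 : 'M[R]_(1, 1 + n)) - xi| <= `|z - gpt t x xi|].
Proof.
have fst_le : `|z.1 - (gpt t x xi).1| <= `|z - gpt t x xi|.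
  by rewrite [X in _ <= X]prod_normE le_max lexx.
have snd_le : `|z.2 - (gpt t x xi).2| <= `|z - gpt t x xi|.
  by rewrite [X in _ <= X]prod_normE le_max lexx orbT.
split; [apply: le_trans fst_le | apply: le_trans fst_le | apply: le_trans snd_le].
- by have := mx_norm_ge_entry (z.1 - (gpt t x xi).1) ord0 ord0;
    rewrite mxE [in X in X -> _]mxE gpt_fst_entry0.
- apply: le_trans (@mx_norm_rsubmx _ 1 1 n _).
  by rewrite (linearB (@rsubmx _ 1 1 n)) /= (@row_mxKr _ 1 1 n).
- apply: le_trans (@mx_norm_rsubmx _ 1 1 n _).
  by rewrite (linearB (@rsubmx _ 1 1 n)) /= (@row_mxKr _ 1 1 n).
Qed.

End CotangentCoordinates.

Lemma continuous_dist_lt {R : realType} {T : normedModType R} {f : T -> R} {z : T} :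
  {for z, continuous f} -> forall e, 0 < e ->
  exists2 r, 0 < r & forall y, `|z - y| < r -> `|f z - f y| < e.
Proof.
move=> /cvgrPdist_lt fz e e0; have /nbhs_ballP [r r0 Hr] := fz e e0.
by exists r => // y zy; apply: Hr; rewrite -ball_normE.
Qed.

Lemma sign_exit_right {R : realType} {f : R -> R} (f_cont : continuous f) (s u : R) :
  s <= u -> f s <= 0 -> 0 < f u -> exists b,
  [/\ s <= b <= u, f b = 0, (forall t, s <= t <= b -> f t <= 0) &
      forall e, 0 < e -> exists2 t, b < t < b + e & 0 < f t].
Proof.
move=> su fs fu.
pose S := [set t | s <= t <= u /\ 0 < f t].
have Su : S u by rewrite /S /= su lexx.
have hinf : has_inf S by split; [exists u | exists s => y [/andP[]]].
have lbS y : S y -> inf S <= y by move=> Sy; apply: ge_inf Sy; case: hinf.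
have sb : s <= inf S by apply: lb_le_inf; [exists u | move=> y [/andP[]]].
have bu : inf S <= u by exact: lbS.
set b := inf S in sb lbS bu.
have le0 t : s <= t -> t < b -> f t <= 0.
  move=> st tb; rewrite leNgt; apply/negP => ft.
  have : b <= t by apply: lbS; split => //; apply/andP; split => //; lra.
  lra.
have fb_ge0 : 0 <= f b.
  rewrite leNgt; apply/negP => fb.
  have [r r0 Hr] := continuous_dist_lt (f_cont b) (- f b) ltac:(lra).
  have [y Sy yb] := inf_adherent r0 hinf.
  have by' := lbS _ Sy; case: Sy => _ fy.
  have : `|f b - f y| < - f b by apply: Hr; rewrite ltr_norml; apply/andP; lra.
  by rewrite ltr_norml => /andP; lra.
have fb_le0 : f b <= 0.
  rewrite leNgt; apply/negP => fb.
  have [sb'|sneb] := eqVneq s b; first by rewrite -sb' in fb; lra.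
  have slb : s < b by rewrite lt_neqAle sneb sb.
  have [r r0 Hr] := continuous_dist_lt (f_cont b) (f b) fb.
  pose m := Num.min r (b - s).
  have [mr mb] : m <= r /\ m <= b - s by rewrite !ge_min !lexx orbT.
  have m0 : 0 < m by rewrite lt_min r0 /=; lra.
  have : `|f b - f (b - m / 2)| < f b.
    by apply: Hr; rewrite ltr_norml; apply/andP; lra.
  by rewrite ltr_norml => /andP[_]; have := le0 (b - m / 2); lra.
have fb : f b = 0 by apply/eqP; rewrite eq_le fb_le0 fb_ge0.
exists b; split.
- by rewrite sb lbS.
- exact: fb.
- move=> t /andP[st]; rewrite le_eqVlt => /orP[/eqP -> | tb]; first by rewrite fb.
  exact: le0.
- move=> e e0; have [y Sy yb] := inf_adherent e0 hinf.
  have by' := lbS _ Sy; case: Sy => _ fy.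
  exists y => //; rewrite yb andbT lt_neqAle by' andbT.
  by apply/eqP => by_; rewrite -by_ fb in fy; lra.
Qed.

Lemma sign_change_within {R : realType} {f : R -> R} (f_cont : continuous f) (s u : R) :
  s <= u -> f s < 0 -> 0 < f u -> exists al be,
  [/\ s <= al <= be, be <= u, (forall t, al <= t <= be -> f t = 0) &
      forall e, 0 < e -> exists sm sp,
        [/\ al - e < sm < al, be < sp < be + e, f sm < 0 & 0 < f sp]].
Proof.
move=> su fs fu.
have [be [/andP[sbe beu] fbe f_le0 f_right]] :=
  sign_exit_right f_cont s u su (ltW fs) fu.
pose g t := - f (- t). (* the left endpoint is the right exit point of g *)
have g_cont : continuous g.
  move=> t; apply: continuousN; apply: continuous_comp; first exact: opp_continuous.
  exact: f_cont.
have gbe : g (- be) <= 0 by rewrite /g opprK fbe oppr0.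
have gs : 0 < g (- s) by rewrite /g opprK oppr_gt0.
have [nal [/andP[nbe_le nal_le] gal g_le0 g_right]] :=
  sign_exit_right g_cont (- be) (- s) ltac:(by rewrite lerN2) gbe gs.
exists (- nal), be; split => //.
- by apply/andP; split; lra.
- move=> t /andP[t1 t2]; apply/eqP; rewrite eq_le; apply/andP; split.
    by apply: f_le0; apply/andP; split; lra.
  by rewrite -oppr_le0 -[t]opprK; apply: g_le0; apply/andP; split; lra.
- move=> e e0; have [tm /andP[tm1 tm2] gtm] := g_right e e0.
  have [tp tp_near ftp] := f_right e e0.
  by exists (- tm), tp; split => //; [apply/andP; split; lra | rewrite /g in gtm; lra].
Qed.

Section LiminfLimsup.
Context {R : realType}.
Implicit Types (u : R ^nat) (c : R).

Let limn_einfE (U : (\bar R)^nat) : limn_einf U = ereal_sup (range (einfs U)).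
Proof. by rewrite limn_einf_lim; apply/cvg_lim => //; exact: cvg_einfs_sup. Qed.

Let limn_esupE (U : (\bar R)^nat) : limn_esup U = ereal_inf (range (esups U)).
Proof. by rewrite limn_esup_lim; apply/cvg_lim => //; exact: cvg_esups_inf. Qed.

Lemma limn_einf_lt_often u c : (limn_einf (EFin \o u) < c%:E)%E ->
  forall N, exists2 k, (N <= k)%N & u k < c.
Proof.
rewrite limn_einfE => uc N.
have : (einfs (EFin \o u) N < c%:E)%E.
  by apply: le_lt_trans uc; apply: ereal_sup_ubound; exists N.
by move=> /ereal_inf_ltP [_ [k /= Nk <-]]; rewrite lte_fin; exists k.
Qed.

Lemma lt_limn_einf_near u c : (c%:E < limn_einf (EFin \o u))%E ->
  \forall k \near \oo, c < u k.
Proof.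
rewrite limn_einfE => /ereal_sup_gtP [_ [N _ <-]] cN; exists N => // k /= Nk.
by rewrite -lte_fin; apply: lt_le_trans cN _; apply: ereal_inf_lbound; exists k.
Qed.

Lemma limn_esup_lt_near u c : (limn_esup (EFin \o u) < c%:E)%E ->
  \forall k \near \oo, u k < c.
Proof.
rewrite limn_esupE => /ereal_inf_ltP [_ [N _ <-]] Nc; exists N => // k /= Nk.
by rewrite -lte_fin; apply: le_lt_trans Nc; apply: ereal_sup_ubound; exists k.
Qed.

Lemma limn_einf_le_near u c : (\forall k \near \oo, u k <= c) ->
  (limn_einf (EFin \o u) <= c%:E)%E.
Proof.
move=> [N _ uc]; rewrite limn_einfE; apply/ereal_supP => _ [M _ <-].
apply: (@le_trans _ _ (u (maxn N M))%:E).
  by apply: ereal_inf_lbound; exists (maxn N M) => //=; rewrite leq_maxr.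
by rewrite lee_fin; apply: uc => /=; rewrite leq_maxl.
Qed.

Lemma le_limn_einf_near u c : (forall e, 0 < e -> \forall k \near \oo, c - e < u k) ->
  (c%:E <= limn_einf (EFin \o u))%E.
Proof.
move=> cu; apply/lee_addgt0Pr => e e0; have [N _ Nu] := cu e e0.
rewrite limn_einfE; apply: (@le_trans _ _ (einfs (EFin \o u) N + e%:E)%E).
  rewrite -leeBlDr // -EFinB; apply/ereal_infP => _ [k /= Nk <-].
  by rewrite lee_fin; apply/ltW/Nu.
by rewrite leeD2r //; apply: ereal_sup_ubound; exists N.
Qed.

Lemma limn_esup_le_near u c : (forall e, 0 < e -> \forall k \near \oo, u k < c + e) ->
  (limn_esup (EFin \o u) <= c%:E)%E.
Proof.
move=> uc; apply/lee_addgt0Pr => e e0; have [N _ Nu] := uc e e0.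
rewrite limn_esupE; apply: (@le_trans _ _ (esups (EFin \o u) N)%E).
  by apply: ereal_inf_lbound; exists N.
apply/ereal_supP => _ [k /= Nk <-].
by rewrite -EFinD lee_fin; apply/ltW/Nu.
Qed.

End LiminfLimsup.

Section Bicharacteristics.
Context {R : realType} {n : nat}.
Variables (q : cotan R n -> R) (a b : R) (x' xi' : 'rV[R]_n).

Definition sign_bichar (al be : R) (x xi : 'rV[R]_n) :=
  is_bichar al be x xi /\ strong_sign_change q al be x xi.

Definition bichar_near (e al be : R) (x xi : 'rV[R]_n) :=
  [/\ `|x - x'| < e, `|xi - xi'| < e, a - e < al & be < b + e].

Lemma bichar_near_le e e' al be x xi : e <= e' ->
  bichar_near e al be x xi -> bichar_near e' al be x xi.
Proof. by move=> ee' [*]; split; lra. Qed.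

Lemma bichar_conv_near {aj bj xj xij} {e : R} : bichar_conv aj bj xj xij a b x' xi' ->
  0 < e -> \forall j \near \oo, bichar_near e (aj j) (bj j) (xj j) (xij j).
Proof.
move=> [ca cb cx cxi] e0.
have ca' : \forall j \near \oo, a - e < aj j.
  by apply: lt_limn_einf_near; apply: lt_le_trans ca; rewrite lte_fin; lra.
have cb' : \forall j \near \oo, bj j < b + e.
  by apply: limn_esup_lt_near; apply: le_lt_trans cb _; rewrite lte_fin; lra.
near=> j; split.
- by rewrite distrC; near: j; exact: cvgr_dist_lt.
- by rewrite distrC; near: j; exact: cvgr_dist_lt.
- by near: j.
- by near: j.
Unshelve. all: by end_near.
Qed.

Lemma near_bichar_conv {aj bj xj xij} {e : R ^nat} : e @ \oo --> 0 ->
  (forall j, bichar_near (e j) (aj j) (bj j) (xj j) (xij j)) ->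
  bichar_conv aj bj xj xij a b x' xi'.
Proof.
move=> e_cvg near_j.
split.
- apply: le_limn_einf_near => c c0; near=> j.
  have [_ _ + _] := near_j j; have : e j < c by near: j; exact: cvgr_lt e_cvg _ c0.
  lra.
- apply: limn_esup_le_near => c c0; near=> j.
  have [_ _ _ +] := near_j j; have : e j < c by near: j; exact: cvgr_lt e_cvg _ c0.
  lra.
- apply/cvgrPdist_lt => c c0; near=> j.
  have [+ _ _ _] := near_j j; have : e j < c by near: j; exact: cvgr_lt e_cvg _ c0.
  rewrite distrC; lra.
- apply/cvgrPdist_lt => c c0; near=> j.
  have [_ + _ _] := near_j j; have : e j < c by near: j; exact: cvgr_lt e_cvg _ c0.
  rewrite distrC; lra.
Unshelve. all: by end_near.
Qed.

Lemma Lp_lt_pinfty : Lp_set q a b x' xi' !=set0 -> (Lp q a b x' xi' < +oo)%E.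
Proof.
move=> [l Ll]; apply: le_lt_trans (ereal_inf_lbound Ll) _.
case: Ll => [aj [bj [xj [xij [_ _ conv ->]]]]].
apply: le_lt_trans (ltry (b - a + 2)); apply: limn_einf_le_near.
near=> j; have [_ _ + +] : bichar_near 1 (aj j) (bj j) (xj j) (xij j).
  by near: j; exact: bichar_conv_near.
lra.
Unshelve. all: by end_near.
Qed.

Lemma Lp_approx e l : 0 < e -> (Lp q a b x' xi' < l%:E)%E ->
  exists al be x xi,
    [/\ sign_bichar al be x xi, bichar_near e al be x xi & be - al < l].
Proof.
move=> e0 /ereal_inf_ltP [_ [aj [bj [xj [xij [hb hs conv ->]]]]] short].
have [N _ nearN] := bichar_conv_near conv e0.
have [k Nk shortk] := limn_einf_lt_often (fun j => bj j - aj j) _ short N.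
by exists (aj k), (bj k), (xj k), (xij k); split => //; exact: nearN.
Qed.

Lemma Lp_local_lb L d : (L%:E <= Lp q a b x' xi')%E -> 0 < d ->
  exists2 eta, 0 < eta & forall al be x xi, sign_bichar al be x xi ->
    bichar_near eta al be x xi -> L - d <= be - al.
Proof.
move=> LLp d0; apply: contrapT => no_eta.
have short k : exists w : R * R * 'rV[R]_n * 'rV[R]_n,
    [/\ sign_bichar w.1.1.1 w.1.1.2 w.1.2 w.2,
        bichar_near (harmonic k) w.1.1.1 w.1.1.2 w.1.2 w.2 &
        w.1.1.2 - w.1.1.1 < L - d].
  apply: contrapT => no_w; apply: no_eta; exists (harmonic k) => [|al be x xi sb nb].
    exact: harmonic_gt0.
  by rewrite leNgt; apply/negP => lt; apply: no_w; exists (al, be, x, xi).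
have [w Hw] := choice short.
have : Lp_set q a b x' xi' (limn_einf (fun j => ((w j).1.1.2 - (w j).1.1.1)%:E)).
  exists (fun j => (w j).1.1.1), (fun j => (w j).1.1.2), (fun j => (w j).1.2),
    (fun j => (w j).2); split => //.
  - by move=> j; have [[]] := Hw j.
  - by move=> j; have [[]] := Hw j.
  - by apply: (near_bichar_conv cvg_harmonic) => j; have [] := Hw j.
move=> /ereal_inf_lbound /(le_trans LLp); apply/negP; rewrite -ltNge.
apply: le_lt_trans (_ : (L - d)%:E < L%:E)%E; last by rewrite lte_fin; lra.
by apply: limn_einf_le_near; near=> j; have [_ _ /ltW] := Hw j.
Unshelve. all: by end_near.
Qed.

End Bicharacteristics.

Lemma open_cover_of_local {T : topologicalType} (P : T -> Prop) (S : set T) :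
  (forall z, S z -> exists2 V, open V & V z /\ forall y, V y -> P y) ->
  exists U, [/\ open U, S `<=` U & forall y, U y -> P y].
Proof.
move=> loc; exists (\bigcup_(V in [set V | open V /\ forall y, V y -> P y]) V).
split.
- by apply: bigcup_open => V [].
- by move=> z /loc [V oV [Vz VP]]; exists V.
- by move=> y [V [_ VP] Vy]; exact: VP.
Qed.

Lemma gpt_continuous {R : realType} {n : nat} (x xi : 'rV[R]_n) :
  continuous (fun s => gpt s x xi).
Proof.
move=> s; apply/cvgrPdist_lt => e e0; near=> y.
rewrite gptB !subrr; apply: le_lt_trans (norm_gpt _ _ _) _.
rewrite normr0 maxxx gt_max e0 andbT.
by near: y; apply/nbhs_ballP; exists e => // y; rewrite -ball_normE.
Unshelve. all: by end_near.
Qed.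

Section VanishingNearApproximants.
Context {R : realType} {n : nat}.
Variable q : cotan R n -> R.
Hypothesis q_cont : forall z, cotan0 R n z -> {for z, continuous q}.
Hypothesis q_indep : forall (x xi eta : 'rV[R]_n.+1), xi != 0 -> eta != 0 ->
  (forall i : 'I_n.+1, i != ord0 -> xi ord0 i = eta ord0 i) ->
  q (x, xi) = q (x, eta).

(* Dropping the xi_1-coordinate of z, which q ignores, puts z on a bicharacteristic. *)
Lemma q_near_gpt {t : R} {x xi : 'rV[R]_n} {z r} : cotan0 R n z -> r <= `|xi| ->
  `|z - gpt t x xi| < r -> exists t' x2 xi2,
  [/\ q z = q (gpt t' x2 xi2), xi2 != 0, `|t' - t| < r, `|x2 - x| < r &
      `|xi2 - xi| < r].
Proof.
case: z => [X Xi] /= Xi0 rxi dz.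
have [dt dx dxi] := dist_gpt_coords t x xi (X, Xi).
set xi2 := rsubmx (Xi : 'M[R]_(1, 1 + n)).
have xi20 : xi2 != 0.
  apply: contraTneq rxi => xi2_0; rewrite -ltNge.
  by have := le_lt_trans dxi dz; rewrite -/xi2 xi2_0 sub0r normrN.
exists (X ord0 ord0), (rsubmx (X : 'M[R]_(1, 1 + n))), xi2; split.
- rewrite /gpt /= row_mx_entry0_rsubmx; apply: q_indep => //.
    exact: row_mx0_neq0.
  by move=> i /row_mx0_rsubmx_eq ->.
- exact: xi20.
- exact: le_lt_trans dt dz.
- exact: le_lt_trans dx dz.
- exact: le_lt_trans dxi dz.
Qed.

Lemma sign_bichar_between (x xi : 'rV[R]_n) s u : xi != 0 -> s <= u ->
  q (gpt s x xi) < 0 -> 0 < q (gpt u x xi) ->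
  exists al be, [/\ sign_bichar q al be x xi, s <= al & be <= u].
Proof.
move=> xi0 su qs qu.
have f_cont : continuous (fun t => q (gpt t x xi)).
  move=> t; apply: (continuous_comp (gpt_continuous x xi t)).
  exact/q_cont/gpt_cotan0.
have [al [be [/andP[sal albe] beu zero sc]]] := sign_change_within f_cont s u su qs qu.
by exists al, be.
Qed.

Lemma sign_change_split_near {al1 be1 : R} {x1 xi1 : 'rV[R]_n} {t e : R} :
  sign_bichar q al1 be1 x1 xi1 -> al1 <= t <= be1 -> 0 < e ->
  exists2 r, 0 < r & forall z, `|z - gpt t x1 xi1| < r -> cotan0 R n z ->
    q z != 0 -> exists al be x xi,
      [/\ sign_bichar q al be x xi, `|x - x1| < e, `|xi - xi1| < e &
          (t - e < al /\ be < be1 + e) \/ (al1 - e < al /\ be < t + e)].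
Proof.
move=> [[_ xi10] [_ sc]] /andP[al1t tbe1] e0.
have [sm [sp [/andP[sm1 sm2] /andP[sp1 sp2] qsm qsp]]] := sc e e0.
have [rm rm0 Hrm] := continuous_dist_lt (q_cont _ (gpt_cotan0 sm x1 _ xi10))
  (- q (gpt sm x1 xi1)) ltac:(lra).
have [rp rp0 Hrp] := continuous_dist_lt (q_cont _ (gpt_cotan0 sp x1 _ xi10)) _ qsp.
pose r := Num.min (Num.min rm rp)
  (Num.min (Num.min e `|xi1|) (Num.min (sp - t) (t - sm))).
(* r preserves the signs of q at g(sm, .) and g(sp, .) and keeps t' in (sm, sp) *)
have := lexx r; rewrite {2}/r !le_min.
move=> /andP[/andP[r_rm r_rp] /andP[/andP[r_e r_xi] /andP[r_sp r_sm]]].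
have r0 : 0 < r by rewrite !lt_min rm0 rp0 e0 normr_gt0 xi10; lra.
exists r => // z dz z0 qz.
have [t' [x2 [xi2 [qzE xi20 dt dx dxi]]]] := q_near_gpt z0 r_xi dz.
have near_fiber s : `|gpt s x1 xi1 - gpt s x2 xi2| < r.
  rewrite gptB subrr; apply: le_lt_trans (norm_gpt _ _ _) _.
  by rewrite normr0 !gt_max r0 (distrC x1) (distrC xi1) dx dxi.
have q2sm : q (gpt sm x2 xi2) < 0.
  have := Hrm _ (lt_le_trans (near_fiber sm) r_rm); rewrite ltr_norml; lra.
have q2sp : 0 < q (gpt sp x2 xi2).
  have := Hrp _ (lt_le_trans (near_fiber sp) r_rp); rewrite ltr_norml; lra.
move: dt; rewrite ltr_norml => /andP[dt1 dt2].
have [q2t|q2t] : q (gpt t' x2 xi2) < 0 \/ 0 < q (gpt t' x2 xi2).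
  by move: qz; rewrite qzE neq_lt => /orP.
- have [al [be [sb t'al besp]]] :=
    sign_bichar_between x2 xi2 t' sp xi20 ltac:(lra) q2t q2sp.
  exists al, be, x2, xi2; split => //; [lra | lra | left; lra].
- have [al [be [sb smal bet']]] :=
    sign_bichar_between x2 xi2 sm t' xi20 ltac:(lra) q2sm q2t.
  exists al, be, x2, xi2; split => //; [lra | lra | right; lra].
Qed.

Variables (a b : R) (x' xi' : 'rV[R]_n).

Lemma q_vanishes_near L d eta al1 be1 (x1 xi1 : 'rV[R]_n) t : 0 < d ->
  (forall al be x xi, sign_bichar q al be x xi ->
     bichar_near a b x' xi' eta al be x xi -> L - d <= be - al) ->
  sign_bichar q al1 be1 x1 xi1 -> bichar_near a b x' xi' (eta / 2) al1 be1 x1 xi1 ->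
  be1 - L + 2 * d <= t <= al1 + L - 2 * d ->
  exists2 V, open V & V (gpt t x1 xi1) /\ forall z, V z -> cotan0 R n z -> q z = 0.
Proof.
move=> d0 long sb1 near1 /andP[t1 t2].
have [nx1 nxi1 na1 nb1] := near1.
have eta0 : 0 < eta by have := normr_ge0 (x1 - x'); lra.
have len1 : L - d <= be1 - al1.
  by apply: long sb1 _; apply: bichar_near_le near1; lra.
pose e := Num.min (d / 4) (eta / 4).
have [e_d e_eta] : e <= d / 4 /\ e <= eta / 4 by rewrite !ge_min !lexx orbT.
have e0 : 0 < e by rewrite lt_min; apply/andP; split; lra.
have tin : al1 <= t <= be1 by apply/andP; split; lra.
have [r r0 split_r] := sign_change_split_near sb1 tin e0.
(* Both pieces the split can produce are shorter than L - d, which [long] forbids. *)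
exists (ball (gpt t x1 xi1) r); first exact: ball_open.
split=> [|z]; first exact: ballxx.
rewrite -ball_normE /= distrC => dz z0; have [//|qz] := eqVneq (q z) 0; exfalso.
have [al [be [x [xi [sb dx dxi sides]]]]] := split_r z dz z0 qz.
have := ler_distD x1 x x'; have := ler_distD xi1 xi xi' => dxi' dx'.
have near : bichar_near a b x' xi' eta al be x xi.
  by case: sides => -[al_lb be_ub]; split; lra.
by have := long al be x xi sb near; case: sides => -[al_lb be_ub]; lra.
Qed.

Lemma good_approximant L d : Lp q a b x' xi' = L%:E -> 0 < d ->
  exists al be x xi, [/\ sign_bichar q al be x xi,
    bichar_near a b x' xi' d al be x xi, L - d <= be - al < L + d &
    exists U, [/\ open U,
      forall t, be - L + 2 * d <= t <= al + L - 2 * d -> U (gpt t x xi) &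
      forall z, U z -> cotan0 R n z -> q z = 0]].
Proof.
move=> LpL d0.
have [eta eta0 long] := Lp_local_lb q a b x' xi' L d ltac:(by rewrite LpL) d0.
pose e := Num.min d (eta / 2).
have [e_d e_eta] : e <= d /\ e <= eta / 2 by rewrite !ge_min !lexx orbT.
have e0 : 0 < e by rewrite lt_min d0; lra.
have [al [be [x [xi [sb near short]]]]] :=
  Lp_approx q a b x' xi' e (L + e) e0 ltac:(by rewrite LpL lte_fin; lra).
exists al, be, x, xi; split => //.
- exact: bichar_near_le near.
- by apply/andP; split; [apply: long sb _; apply: bichar_near_le near | ]; lra.
pose S := (fun t => gpt t x xi) @` [set t | be - L + 2 * d <= t <= al + L - 2 * d].
have [|U [oU SU U0]] := open_cover_of_local (fun z => cotan0 R n z -> q z = 0) S.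
  move=> _ [t tin <-]; apply: q_vanishes_near d0 long sb _ tin.
  by apply: bichar_near_le near.
by exists U; split => // t tin; apply: SU; exists t.
Qed.

End VanishingNearApproximants.

Theorem lemma2p19 (R : realType) (n : nat) (q : cotan R n -> R)
  (q_smooth : smooth_on (cotan0 R n) q)
  (q_indep : forall (x xi eta : 'rV[R]_n.+1), xi != 0 -> eta != 0 ->
     (forall i : 'I_n.+1, i != ord0 -> xi ord0 i = eta ord0 i) ->
     q (x, xi) = q (x, eta))
  (a b : R) (x' xi' : 'rV[R]_n)
  (hgamma : is_bichar a b x' xi')
  (hLdef : Lp_set q a b x' xi' !=set0)
  (hLpos : (0 < Lp q a b x' xi')%E) :
  exists (aj bj cj dj : nat -> R) (xj xij : nat -> 'rV[R]_n),
    [/\ forall j, is_bichar (aj j) (bj j) (xj j) (xij j) /\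
          strong_sign_change q (aj j) (bj j) (xj j) (xij j),
        bichar_conv aj bj xj xij a b x' xi',
        forall j, aj j <= cj j /\ cj j <= dj j /\ dj j <= bj j,
        (fun j => (dj j - cj j)%:E) @ \oo --> Lp q a b x' xi' &
        forall j, exists U : set (cotan R n),
          [/\ open U,
              forall t, cj j <= t <= dj j -> U (gpt t (xj j) (xij j)) &
              forall z, U z -> cotan0 R n z -> q z = 0]].
Proof.
have q_cont z : cotan0 R n z -> {for z, continuous q}.
  by move=> z0; have [] := q_smooth [::] z z0.
have [L LpL] : exists L, Lp q a b x' xi' = L%:E.
  exists (fine (Lp q a b x' xi')); rewrite fineK // ge0_fin_numE ?Lp_lt_pinfty //.
  exact: ltW.
have L0 : 0 < L by rewrite -lte_fin -LpL.
pose d m := L / 8 * harmonic m. (* d m <= L / 8 keeps [c_j, d_j] nonempty *)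
have d0 m : 0 < d m by rewrite mulr_gt0 ?harmonic_gt0 //; lra.
have dL m : d m <= L / 8.
  by rewrite -[leRHS]mulr1 ler_wpM2l ?invf_le1 ?ler1n //; lra.
have d_cvg : d @ \oo --> 0 by rewrite -(mulr0 (L / 8)); exact: cvgMl_tmp cvg_harmonic.
have [A HA] :=
  choice (fun m => good_approximant q q_cont q_indep a b x' xi' L (d m) LpL (d0 m)).
have [B HB] := choice HA.
have [X HX] := choice HB.
have [XI HXI] := choice HX.
exists A, B, (fun m => B m - L + 2 * d m), (fun m => A m + L - 2 * d m), X, XI; split.
- by move=> m; have [] := HXI m.
- by apply: (near_bichar_conv a b x' xi' d_cvg) => m; have [] := HXI m.
- by move=> m; have [_ _ /andP[len1 len2] _] := HXI m; have := dL m; split; lra.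
- rewrite LpL; apply: cvg_EFin; first exact: nearW.
  apply/cvgrPdist_lt => c c0; near=> m; have [_ _ /andP[len1 len2] _] := HXI m.
  have : d m < c / 5 by near: m; apply: cvgr_lt d_cvg _ _; lra.
  by rewrite /= ltr_norml => dm; apply/andP; split; lra.
- by move=> m; have [_ _ _ [U]] := HXI m; exists U.
Unshelve. all: by end_near.
Qed.
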